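(* Assume $(H_S(\infty))$ and let $\mathbf a_\lambda,\mathbf n_\lambda,\mathbf m_\lambda$ be as in the context. Let $(N^S_t(i))_{t\ge0,i\in\mathbb{Z}}$ be i.i.d. $SR(\mu_S)$-processes and $a<b$. Then: (i) for $t<1$, $\lim_{\lambda\to0}\Pr[\forall i\in\{\lfloor a\mathbf m_\lambda\rfloor,\dots,\lfloor b\mathbf m_\lambda\rfloor\},\ N^S_{\mathbf a_\lambda t}(i)>0]=0$; (ii) for $t\ge1$, the same probability tends to $1$; (iii) for $t<1$, $\lim_{\lambda\to0}\Pr[\forall i\in\{\lfloor a\mathbf n_\lambda\rfloor,\dots,\lfloor b\mathbf n_\lambda\rfloor\},\ N^S_{\mathbf a_\lambda t}(i)>0]=0$; (iv) for $t>1$, the probability in (iii) tends to $1$; (v) for $t>0$, $\lim_{\lambda\to0}\Pr[\exists i\in\{\lfloor a\mathbf m_\lambda\rfloor,\dots,\lfloor b\mathbf m_\lambda\rfloor\},\ N^S_{\mathbf a_\lambda t}(i)>0]=1$.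
   Context: $(H_S(\infty))$: $\mu_S$ is a probability measure on $(0,\infty)$ with unbounded support and finite mean $m_S$; with $\nu_S(dt)=m_S^{-1}\mu_S((t,\infty))dt$, for all $t>0$, $\lim_{x\to\infty}\nu_S((x,\infty))/\nu_S((tx,\infty))=t^\infty$ ($=0,1,\infty$ according as $t<1,t=1,t>1$). $\mathbf a_\lambda$ is the unique solution of $\lambda\mathbf a_\lambda=\nu_S((\mathbf a_\lambda,\infty))$, $\mathbf n_\lambda=\lfloor1/(\lambda\mathbf a_\lambda)\rfloor$, and $\mathbf m_\lambda:(0,1]\to\mathbb{N}$ is non-increasing with $\mathbf m_\lambda\to\infty$, $\mathbf m_\lambda/\mathbf n_\lambda\to0$, and $\mathbf m_\lambda\nu_S((\mathbf a_\lambda z,\infty))\to\infty$ for every $z\in[0,1)$, as $\lambda\to0$. A $SR(\mu)$-process: $N_t=\#\{k\ge1:T_k\le t\}$ with $T_1\sim\nu_\mu(dt)=m_\mu^{-1}\mu((t,\infty))dt$, $T_{k+1}=T_k+X_k$, $(X_k)$ i.i.d. with law $\mu$ independent of $T_1$. *)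

From HB Require Import structures.
From mathcomp Require Import all_boot all_order all_algebra.
From mathcomp Require Import all_classical all_reals all_analysis.
Set Implicit Arguments. Unset Strict Implicit. Unset Printing Implicit Defensive.
Import Order.TTheory GRing.Theory Num.Theory.
Import numFieldNormedType.Exports.
Local Open Scope classical_set_scope.
Local Open Scope ring_scope.

Definition mutually_independent d (T : measurableType d) (R : realType)
  (P : probability T R) (I : eqType) (Y : I -> T -> R) : Prop :=
  (forall i, measurable_fun setT (Y i)) /\
  forall (J : seq I) (B : I -> set R), uniq J -> (forall j, measurable (B j)) ->
    P (\bigcap_(j in [set j | j \in J]) (Y j @^-1` B j)) =
    (\prod_(j <- J) P (Y j @^-1` B j))%E.

Definition mean (R : realType) (mu : probability R R) : R :=
  fine (\int[mu]_x (x%:E)).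

Definition nu (R : realType) (mu : probability R R) (A : set R) : \bar R :=
  ((mean mu)^-1)%:E *
  \int[lebesgue_measure]_(t in A `&` `]0%R, +oo[) mu [set x : R | (t < x)%R].

(* k-th arrival time T_{k+1} = T_1 + X_1 + ... + X_k of process i *)
Definition arrival d (T : measurableType d) (R : realType)
  (T1 : int -> T -> R) (X : int -> nat -> T -> R) (i : int) (k : nat) (w : T) : R :=
  T1 i w + \sum_(j < k) X i j w.

Definition Ncount d (T : measurableType d) (R : realType)
  (T1 : int -> T -> R) (X : int -> nat -> T -> R) (i : int) (t : R) (w : T) : \bar R :=
  \esum_(k in [set k : nat | arrival T1 X i k w <= t]) 1%E.

Definition SRfamily d (T : measurableType d) (R : realType)
  (T1 : int -> T -> R) (X : int -> nat -> T -> R) (u : int + (int * nat)) : T -> R :=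
  match u with inl i => T1 i | inr (i, k) => X i k end.

(* A stationary renewal process started at T_1 has a point in [0, s] exactly
   when T_1 <= s, since the interarrival times are almost surely positive.  By
   independence, all c processes of a window have a point in [0, s] with
   probability (1 - q)^c, and some of them with probability 1 - q^c, where
   q = nu((s, +oo)).  At s = a_lambda t the five limits thus reduce to the
   behaviour of c q: the index -oo variation of the tail of nu together with
   lambda a_lambda = nu((a_lambda, +oo)) send c q to +oo in (i) and (iii) and
   to 0 in (ii) and (iv), while q <= 1/2 eventually in (v). *)

From HB Require Import structures.
From mathcomp Require Import all_boot all_order all_algebra.
From mathcomp Require Import all_classical all_reals all_analysis.
From mathcomp Require Import measurable_realfun ring lra zify.
Set Implicit Arguments. Unset Strict Implicit. Unset Printing Implicit Defensive.

Import Order.TTheory GRing.Theory Num.Theory.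
Import numFieldNormedType.Exports.
Local Open Scope classical_set_scope.
Local Open Scope ring_scope.

Lemma int_interval_offset (lo hi i : int) : lo <= hi ->
  (lo <= i <= hi) <-> exists2 k, (k < (`|hi - lo|).+1)%N & i = lo + k%:Z.
Proof.
move=> lohi; split => [/andP[loi ihi]|[k kc ->]]; last by lia.
by exists `|i - lo|%N; [lia | rewrite gez0_abs ?subr_ge0 // subrKC].
Qed.

Lemma measurable_forall_lt d (T : measurableType d) (E : nat -> set T) (c : nat) :
  (forall k, measurable (E k)) -> measurable [set w | forall k, (k < c)%N -> E k w].
Proof. by move=> mE; apply: bigcap_measurableType. Qed.

Lemma measurable_exists_lt d (T : measurableType d) (E : nat -> set T) (c : nat) :
  (forall k, measurable (E k)) -> measurable [set w | exists2 k, (k < c)%N & E k w].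
Proof. by move=> mE; apply: bigcup_measurable. Qed.

Lemma eq_measure_outside_null d (T : measurableType d) (R : realType)
  (mu : {measure set T -> \bar R}) (A S S' : set T) :
  measurable A -> mu A = 0%E -> measurable S -> measurable S' ->
  (forall w, ~ A w -> S w <-> S' w) -> mu S = mu S'.
Proof.
move=> mA A0 mS mS' SS'.
rewrite -(measureU0 mS mA A0) -(measureU0 mS' mA A0); congr (mu _).
apply/seteqP; split => w [Sw|Aw]; (try by right);
  (have [Aw|nAw] := pselect (A w); [by right | left; exact/(SS' w nAw)]).
Qed.

Lemma Ncount_gt0 d (T : measurableType d) (R : realType)
  (T1 : int -> T -> R) (X : int -> nat -> T -> R) i s w :
  (0 < Ncount T1 X i s w)%E <-> exists k, arrival T1 X i k w <= s.
Proof.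
rewrite /Ncount; split => [|[k hk]].
- apply: contraPP => nk; rewrite esum1 ?ltxx // => k ks; by case: nk; exists k.
- apply: (@lt_le_trans _ _ 1%E) => //; apply: esum_ge; exists [set k].
    by split; [exact: finite_set1 | move=> j /= ->].
  by rewrite fsbig_set1.
Qed.

Lemma Ncount_gt0_T1 d (T : measurableType d) (R : realType)
  (T1 : int -> T -> R) (X : int -> nat -> T -> R) i s w :
  (forall k, 0 < X i k w) -> (0 < Ncount T1 X i s w)%E <-> T1 i w <= s.
Proof.
move=> X_gt0; rewrite Ncount_gt0; split => [[k]|T1s]; last first.
  by exists 0%N; rewrite /arrival big_ord0 addr0.
apply: le_trans; rewrite /arrival lerDl; apply: sumr_ge0 => j _; exact/ltW.
Qed.

(* The number of integers in [floor (a M), floor (b M)], provided a <= b and 0 <= M. *)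
Definition window_size (R : realType) (a b M : R) : nat :=
  (`|Num.floor (b * M) - Num.floor (a * M)|%N).+1.

Lemma floor_window_le (R : realType) (a b M : R) : a <= b -> 0 <= M ->
  Num.floor (a * M) <= Num.floor (b * M).
Proof. by move=> ab M0; apply/le_floor/ler_wpM2r. Qed.

Lemma window_size_bounds (R : realType) (a b M : R) : a <= b -> 0 <= M ->
  (b - a) * M <= (window_size a b M)%:R <= (b - a) * M + 2.
Proof.
move=> ab M0; rewrite /window_size -natr1 natr_absz.
rewrite ger0_norm ?subr_ge0 ?floor_window_le // intrB.
have := floor_le (a * M); have := floorD1_gt (a * M).
have := floor_le (b * M); have := floorD1_gt (b * M).
rewrite !intrD mulrBl.
move: (Num.floor (a * M))%:~R (Num.floor (b * M))%:~R => x y.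
by move=> *; apply/andP; split; lra.
Qed.

Lemma window_size_le (R : realType) (a b M : R) : a <= b -> 1 <= M ->
  (window_size a b M)%:R <= (b - a + 2) * M.
Proof.
move=> ab M1; have /andP[_ cM] := window_size_bounds ab (le_trans ler01 M1).
by apply: le_trans cM _; rewrite -subr_ge0 in ab; nra.
Qed.

Section window.
Variables (R : realType) (a b M : R) (E : int -> Prop).
Hypotheses (ab : a <= b) (M0 : 0 <= M).
Let lo := Num.floor (a * M).
Let hi := Num.floor (b * M).

Lemma window_forallE :
  (forall i, lo <= i <= hi -> E i) <->
  (forall k, (k < window_size a b M)%N -> E (lo + k%:Z)).
Proof.
have lohi : lo <= hi by exact: floor_window_le.
split => [H k kc|H i /(int_interval_offset _ lohi)[k kc ->]]; last exact: H.
by apply: H; apply/(int_interval_offset _ lohi); exists k.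
Qed.

Lemma window_existsE :
  (exists i, lo <= i <= hi /\ E i) <->
  (exists2 k, (k < window_size a b M)%N & E (lo + k%:Z)).
Proof.
have lohi : lo <= hi by exact: floor_window_le.
split => [[i [/(int_interval_offset _ lohi)[k kc ->] Ei]]|[k kc Ek]].
  by exists k.
by exists (lo + k%:Z); split => //; apply/(int_interval_offset _ lohi); exists k.
Qed.

End window.

Definition tail_nu (R : realType) (mu : probability R R) (s : R) : R :=
  fine (nu mu `]s, +oo[).

Section stationary_renewal_family.
Variables (d : measure_display) (Omega : measurableType d) (R : realType).
Variables (P : probability Omega R) (muS : probability R R).
Variables (T1 : int -> Omega -> R) (X : int -> nat -> Omega -> R).
Hypothesis indep : mutually_independent P (SRfamily T1 X).
Hypothesis T1_law : forall i A, measurable A -> P (T1 i @^-1` A) = nu muS A.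

Let measurable_T1 i B : measurable B -> measurable (T1 i @^-1` B).
Proof. by move=> mB; rewrite -[X in measurable X]setTI; exact: (indep.1 (inl i)). Qed.

Let measurable_X i k B : measurable B -> measurable (X i k @^-1` B).
Proof. by move=> mB; rewrite -[X in measurable X]setTI; exact: (indep.1 (inr (i, k))). Qed.

Lemma nu_fin_num B : measurable B -> nu muS B \is a fin_num.
Proof. by move=> mB; rewrite -(T1_law 0 mB) fin_num_measure //; exact: measurable_T1. Qed.

Lemma tail_nuE s : (tail_nu muS s)%:E = P (T1 0 @^-1` `]s, +oo[).
Proof. by rewrite T1_law // fineK // nu_fin_num. Qed.

Lemma tail_nu_ge0_le1 s : 0 <= tail_nu muS s <= 1.
Proof.
by rewrite -!lee_fin tail_nuE measure_ge0 probability_le1 //; exact: measurable_T1.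
Qed.

Lemma tail_nu_noninc : {homo tail_nu muS : x y / x <= y >-> y <= x}.
Proof.
move=> x y xy; rewrite -lee_fin !tail_nuE; apply: le_measure; rewrite ?inE;
  try exact: measurable_T1.
by move=> w /=; rewrite !in_itv /= !andbT; exact: le_lt_trans.
Qed.

Lemma fine_nu_lower_tail s : fine (nu muS `]-oo, s]) = 1 - tail_nu muS s.
Proof.
apply: EFin_inj; rewrite EFinB tail_nuE -probability_setC; last exact: measurable_T1.
by rewrite preimage_setC setCitvr fineK ?nu_fin_num // T1_law.
Qed.

Lemma prob_T1_window lo c B : measurable B ->
  P [set w | forall k, (k < c)%N -> B (T1 (lo + k%:Z) w)] = (fine (nu muS B) ^+ c)%:E.
Proof.
move=> mB; pose J := [seq inl (lo + k%:Z) | k <- iota 0 c] : seq (int + int * nat).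
have J_uniq : uniq J.
  by rewrite map_inj_uniq ?iota_uniq // => k1 k2 [] /addrI [].
have -> : [set w | forall k, (k < c)%N -> B (T1 (lo + k%:Z) w)] =
    \bigcap_(j in [set j | j \in J]) SRfamily T1 X j @^-1` B.
  apply/seteqP; split => w /= Bw.
  - by move=> j /mapP[k]; rewrite mem_iota => /andP[_ kc] ->; exact: Bw.
  - move=> k kc; apply: (Bw (inl (lo + k%:Z))); apply/mapP; exists k => //.
    by rewrite mem_iota.
rewrite indep.2 // big_map (eq_bigr (fun=> (fine (nu muS B))%:E)) => [|k _];
  last by rewrite /= T1_law // fineK // nu_fin_num.
by rewrite prodEFin -(subn0 c) -/(index_iota 0 c) prodr_const_nat.
Qed.

Lemma prob_all_T1_le lo c s :
  P [set w | forall k, (k < c)%N -> `]-oo, s]%classic (T1 (lo + k%:Z) w)] =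
  ((1 - tail_nu muS s) ^+ c)%:E.
Proof. by rewrite prob_T1_window // fine_nu_lower_tail. Qed.

Lemma prob_exists_T1_le lo c s :
  P [set w | exists2 k, (k < c)%N & `]-oo, s]%classic (T1 (lo + k%:Z) w)] =
  (1 - tail_nu muS s ^+ c)%:E.
Proof.
have -> : [set w | exists2 k, (k < c)%N & `]-oo, s]%classic (T1 (lo + k%:Z) w)] =
    ~` [set w | forall k, (k < c)%N -> `]s, +oo[%classic (T1 (lo + k%:Z) w)].
  apply/seteqP; split => w /=.
  - move=> [k kc]; rewrite /= in_itv /= => T1s /(_ k kc).
    by rewrite /= in_itv /= andbT ltNge T1s.
  - move=> /existsNP[k] /not_implyP[kc]; rewrite /= !in_itv /= andbT => /negP.
    by rewrite -leNgt; exists k.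
rewrite probability_setC ?prob_T1_window //.
by apply: measurable_forall_lt => k; exact: measurable_T1.
Qed.

Lemma measurable_Ncount_gt0 i s : measurable [set w | (0 < Ncount T1 X i s w)%E].
Proof.
have -> : [set w | (0 < Ncount T1 X i s w)%E] =
    \bigcup_k (arrival T1 X i k @^-1` `]-oo, s]).
  apply/seteqP; split => w /= => [/Ncount_gt0[k sk]|[k _ sk]].
  - by exists k => //=; rewrite in_itv.
  - by apply/Ncount_gt0; exists k; rewrite /= in_itv in sk.
apply: bigcupT_measurable => k.
have m_arrival : measurable_fun setT (arrival T1 X i k).
  apply: measurable_funD; first exact: (indep.1 (inl i)).
  by apply: measurable_sum => j; exact: (indep.1 (inr (i, nat_of_ord j))).
by rewrite -[X in measurable X]setTI; exact: m_arrival.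
Qed.

Hypothesis muS_pos : muS `]0%R, +oo[%classic = 1%E.
Hypothesis X_law : forall i k A, measurable A -> P (X i k @^-1` A) = muS A.

Lemma interarrivals_gt0_ae : exists A : set Omega,
  [/\ measurable A, P A = 0%E & forall w, ~ A w -> forall i k, 0 < X i k w].
Proof.
pose F n : set Omega :=
  if unpickle n is Some (i, k) then X i k @^-1` `]-oo, 0] else set0.
have : P.-negligible (\bigcup_n F n).
  apply: negligible_bigcup => n; rewrite /F; case: (unpickle n) => [[i k]|];
    last exact: negligible_set0.
  exists (X i k @^-1` `]-oo, 0]); split => //; first exact: measurable_X.
  transitivity (muS `]-oo, 0]%classic); first exact: X_law.
  by rewrite -setCitvr probability_setC // muS_pos subee.
case=> A [mA A0 FA]; exists A; split => // w nAw i k.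
rewrite ltNge; apply/negP => Xle0; apply: nAw; apply: FA.
by exists (pickle (i, k)) => //; rewrite /F pickleK /= in_itv.
Qed.

Section windows.
Variables (a b : R) (ab : a < b).

Lemma prob_window_all M s : 0 <= M ->
  P [set w | forall i, Num.floor (a * M) <= i <= Num.floor (b * M) ->
                       (0 < Ncount T1 X i s w)%E] =
  ((1 - tail_nu muS s) ^+ window_size a b M)%:E.
Proof.
move=> M0; have [A [mA A0 XA]] := interarrivals_gt0_ae.
have -> : [set w | forall i, Num.floor (a * M) <= i <= Num.floor (b * M) ->
                       (0 < Ncount T1 X i s w)%E] =
    [set w | forall k, (k < window_size a b M)%N ->
                       (0 < Ncount T1 X (Num.floor (a * M) + k%:Z) s w)%E].
  apply/seteqP; split => w /=;
    by move/(window_forallE (fun i => 0 < Ncount T1 X i s w)%E (ltW ab) M0).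
rewrite -(prob_all_T1_le (Num.floor (a * M))).
apply: (eq_measure_outside_null mA A0).
- by apply: measurable_forall_lt => k; exact: measurable_Ncount_gt0.
- by apply: measurable_forall_lt => k; exact: measurable_T1.
- by move=> w /XA Xw; split => H k /H; rewrite Ncount_gt0_T1 // in_itv.
Qed.

Lemma prob_window_exists M s : 0 <= M ->
  P [set w | exists i, Num.floor (a * M) <= i <= Num.floor (b * M) /\
                       (0 < Ncount T1 X i s w)%E] =
  (1 - tail_nu muS s ^+ window_size a b M)%:E.
Proof.
move=> M0; have [A [mA A0 XA]] := interarrivals_gt0_ae.
have -> : [set w | exists i, Num.floor (a * M) <= i <= Num.floor (b * M) /\
                       (0 < Ncount T1 X i s w)%E] =
    [set w | exists2 k, (k < window_size a b M)%N &
                       (0 < Ncount T1 X (Num.floor (a * M) + k%:Z) s w)%E].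
  apply/seteqP; split => w /=;
    by move/(window_existsE (fun i => 0 < Ncount T1 X i s w)%E (ltW ab) M0).
rewrite -(prob_exists_T1_le (Num.floor (a * M))).
apply: (eq_measure_outside_null mA A0).
- by apply: measurable_exists_lt => k; exact: measurable_Ncount_gt0.
- by apply: measurable_exists_lt => k; exact: measurable_T1.
- move=> w /XA Xw; split => -[k kc Hk]; exists k => //;
  by move: Hk; rewrite /= Ncount_gt0_T1 // in_itv.
Qed.

Variables (T : Type) (F : set_system T) (FF : Filter F) (M s : T -> R).
Hypothesis M_ge0 : \forall l \near F, 0 <= M l.

Lemma prob_window_all_cvg L :
  (fun l => (1 - tail_nu muS (s l)) ^+ window_size a b (M l)) @ F --> L ->
  (fun l => P [set w | forall i, Num.floor (a * M l) <= i <= Num.floor (b * M l) ->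
                                 (0 < Ncount T1 X i (s l) w)%E]) @ F --> L%:E.
Proof.
move=> cvgL.
have cvgE : (fun l => ((1 - tail_nu muS (s l)) ^+ window_size a b (M l))%:E) @ F --> L%:E.
  by apply: cvg_EFin => //; exact: nearW.
apply: cvg_trans cvgE; apply: near_eq_cvg.
by near=> l; rewrite prob_window_all //; near: l.
Unshelve. all: by end_near.
Qed.

Lemma prob_window_exists_cvg L :
  (fun l => 1 - tail_nu muS (s l) ^+ window_size a b (M l)) @ F --> L ->
  (fun l => P [set w | exists i, Num.floor (a * M l) <= i <= Num.floor (b * M l) /\
                                 (0 < Ncount T1 X i (s l) w)%E]) @ F --> L%:E.
Proof.
move=> cvgL.
have cvgE : (fun l => (1 - tail_nu muS (s l) ^+ window_size a b (M l))%:E) @ F --> L%:E.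
  by apply: cvg_EFin => //; exact: nearW.
apply: cvg_trans cvgE; apply: near_eq_cvg.
by near=> l; rewrite prob_window_exists //; near: l.
Unshelve. all: by end_near.
Qed.

End windows.

End stationary_renewal_family.

Lemma bernoulli_ineq (R : realFieldType) (x : R) n :
  -1 <= x -> 1 + n%:R * x <= (1 + x) ^+ n.
Proof.
move=> x_ge; elim: n => [|n IH]; first by rewrite mul0r addr0 expr0.
have x1_ge0 : 0 <= 1 + x by lra.
rewrite exprSr; apply: le_trans (ler_wpM2r x1_ge0 IH).
have : 0 <= n%:R * x ^+ 2 by rewrite mulr_ge0 ?sqr_ge0.
by rewrite -natr1 expr2; nra.
Qed.

Lemma one_sub_exp_le_inv (R : realFieldType) (q : R) n : 0 <= q <= 1 ->
  (1 - q) ^+ n <= (1 + n%:R * q)^-1.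
Proof.
move=> /andP[q0 q1]; have nq_gt0 : 0 < 1 + n%:R * q by rewrite ltr_pwDl ?mulr_ge0.
rewrite -(ler_pM2r nq_gt0) mulVf ?gt_eqF //.
apply: (@le_trans _ _ ((1 - q) ^+ n * (1 + q) ^+ n)).
  by rewrite ler_wpM2l ?exprn_ge0 ?subr_ge0 // bernoulli_ineq //; lra.
by rewrite -exprMn exprn_ile1 //; nra.
Qed.

Lemma floor_inv_bounds (R : realType) (u : R) : 0 < u <= 1 ->
  let N : R := (Num.floor (1 / u))%:~R in [/\ 1 <= N, N * u <= 1 & 1 <= 2 * (N * u)].
Proof.
move=> /andP[u0 u1] N.
have inv_ge1 : 1 <= 1 / u by rewrite ler_pdivlMr // mul1r.
have N_ge1 : 1 <= N by rewrite ler1z floor_ge_int.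
have uK : 1 / u * u = 1 by rewrite mul1r mulVf ?gt_eqF.
have := floor_le (1 / u); have := floorD1_gt (1 / u); rewrite intrD -/N => Nlt Nle.
split => //; first by rewrite -uK ler_pM2r.
have : (1 / u - 1) * u < N * u by rewrite ltr_pM2r //; lra.
have : u <= N * u by rewrite ler_peMl // ltW.
rewrite mulrBl uK mul1r; lra.
Qed.

Section one_sub_exp_cvg.
Variables (R : realType) (T : Type) (F : set_system T) (FF : Filter F).
Variables (q : T -> R) (c : T -> nat).
Hypothesis q01 : forall l, 0 <= q l <= 1.

Lemma one_sub_exp_cvg0 : (fun l => (c l)%:R * q l) @ F --> +oo ->
  (fun l => (1 - q l) ^+ c l) @ F --> (0 : R).
Proof.
move=> /cvgryPge cq_y.
have q0 l : 0 <= q l by case/andP: (q01 l).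
apply: (@squeeze_cvgr _ _ _ _ (fun=> 0) (fun l => (1 + (c l)%:R * q l)^-1)).
- apply: nearW => l; rewrite exprn_ge0 ?one_sub_exp_le_inv //=.
  by rewrite subr_ge0; case/andP: (q01 l).
- exact: cvg_cst.
- apply/gtr0_cvgV0; first by apply: nearW => l; rewrite ltr_pwDl ?mulr_ge0.
  by apply/cvgryPge => A; apply: filterS (cq_y A) => l; apply: ler_wpDl.
Qed.

Lemma one_sub_exp_cvg1 : (fun l => (c l)%:R * q l) @ F --> 0 ->
  (fun l => (1 - q l) ^+ c l) @ F --> (1 : R).
Proof.
move=> cq0; apply: (@squeeze_cvgr _ _ _ _ (fun l => 1 - (c l)%:R * q l) (fun=> (1 : R))).
- apply: nearW => l; have /andP[q0 q1] := q01 l.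
  rewrite exprn_ile1 ?subr_ge0 ?andbT ?gerBl //.
  by have := @bernoulli_ineq _ (- q l) (c l); rewrite mulrN; apply; lra.
- by rewrite -[X in _ --> X]subr0; apply: cvgB => //; exact: cvg_cst.
- exact: cvg_cst.
Qed.

End one_sub_exp_cvg.

Lemma exp_cvg0_le_half (R : realType) (T : Type) (F : set_system T) (FF : Filter F)
    (q : T -> R) (c : T -> nat) :
  (\forall l \near F, 0 <= q l <= 1 / 2) -> (fun l => (c l)%:R : R) @ F --> +oo ->
  (fun l => q l ^+ c l) @ F --> (0 : R).
Proof.
move=> q_half /cvgryPge c_y.
apply: (@squeeze_cvgr _ _ _ _ (fun=> 0) (fun l => (1 - 1 / 2) ^+ c l)).
- by apply: filterS q_half => l /andP[q0 q1]; rewrite exprn_ge0 ?lerXn2r ?nnegrE //; lra.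
- exact: cvg_cst.
- apply: one_sub_exp_cvg0 => [l|]; first lra.
  apply/cvgryPge => A; apply: filterS (c_y (2 * A)) => l; lra.
Qed.

Section tail_asymptotics.
Variables (R : realType) (G aL : R -> R).
Hypothesis G01 : forall x, 0 <= G x <= 1.
Hypothesis G_noninc : {homo G : x y / x <= y >-> y <= x}.
Hypothesis aL_def : forall l, 0 < l <= 1 -> l * aL l = G (aL l).

Let G_ge0 x : 0 <= G x. Proof. by case/andP: (G01 x). Qed.

Lemma aL_cvgy : (fun x => G x / G (1 * x)) @ +oo --> (1 : R) -> aL @ 0^'+ --> +oo.
Proof.
move=> /cvgrPdist_lt ratio1; have half_gt0 : 0 < 1 / 2 :> R by lra.
(* where G x = 0 the ratio is 0 / 0 = 0, far from 1 *)
have [x0 [_ Gx0]] : \forall x \near +oo, 0 < G x.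
  apply: filterS (ratio1 _ half_gt0) => x; rewrite mul1r; apply: contraTT.
  rewrite -leNgt => Gx_le0; have -> : G x = 0 by apply/le_anti; rewrite Gx_le0 G_ge0.
  by rewrite mul0r subr0 normr1 -leNgt; lra.
apply/cvgryPge => A; pose M := `|A| + `|x0| + 1.
have [AM x0M M_gt0] : [/\ A <= M, x0 < M & 0 < M].
  have := normr_ge0 A; have := normr_ge0 x0; have := ler_norm A; have := ler_norm x0.
  by rewrite /M; split; lra.
have GM_gt0 : 0 < G M by exact: Gx0.
near=> l.
have l_gt0 : 0 < l by near: l; exact: nbhs_right_gt.
have l_le1 : l <= 1 by apply: ltW; near: l; exact: nbhs_right_lt.
have lM : l * M < G M.
  by rewrite -ltr_pdivlMr //; near: l; apply: nbhs_right_lt; rewrite divr_gt0.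
(* aL l < M would give G M <= G (aL l) = l * aL l < l * M < G M *)
apply: le_trans AM _; rewrite leNgt; apply/negP => aLM.
have laL : l * aL l = G (aL l) by apply: aL_def; rewrite l_gt0 l_le1.
have := G_noninc (ltW aLM); have : l * aL l < l * M by rewrite ltr_pM2l.
lra.
Unshelve. all: by end_near.
Qed.

Hypothesis aLy : aL @ 0^'+ --> +oo.

Lemma near_aL : \forall l \near 0^'+, [/\ 0 < l <= 1, 0 < aL l & 0 < G (aL l) <= 1].
Proof.
near=> l.
have l_gt0 : 0 < l by near: l; exact: nbhs_right_gt.
have l_le1 : l <= 1 by apply: ltW; near: l; exact: nbhs_right_lt.
have aL_gt0 : 0 < aL l by near: l; move/cvgryPgt: aLy; apply.
have laL : l * aL l = G (aL l) by apply: aL_def; rewrite l_gt0 l_le1.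
split; rewrite ?l_gt0 ?l_le1 // -laL mulr_gt0 //= laL.
by case/andP: (G01 (aL l)).
Unshelve. all: by end_near.
Qed.

Let nL l : R := (Num.floor (1 / (l * aL l)))%:~R.

Lemma near_nL_bounds : \forall l \near 0^'+,
  [/\ 1 <= nL l, nL l * G (aL l) <= 1 & 1 <= 2 * (nL l * G (aL l))].
Proof.
near=> l.
have [/andP[l_gt0 l_le1] aL_gt0 u01] : [/\ 0 < l <= 1, 0 < aL l & 0 < G (aL l) <= 1].
  by near: l; exact: near_aL.
by rewrite /nL -aL_def ?l_gt0 ?l_le1 //; apply: floor_inv_bounds; rewrite aL_def ?l_gt0.
Unshelve. all: by end_near.
Qed.

Hypothesis ratio_lt1 :
  forall z, 0 < z < 1 -> (fun x => G x / G (z * x)) @ +oo --> (0 : R).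

Hypothesis ratio_gt1 : forall z, 1 < z -> (fun x => G x / G (z * x)) @ +oo --> +oo.

Lemma tail_le_half : \forall x \near +oo, G x <= 1 / 2.
Proof.
have half01 : 0 < (1 / 2 : R) < 1 by apply/andP; split; lra.
have /cvgrPdist_lt ratio0 := ratio_lt1 half01.
near=> x.
have x_ge0 : 0 <= x by near: x; exact: nbhs_pinfty_ge.
have Gx_le : G x <= G (1 / 2 * x) by apply: G_noninc; lra.
have [g0|g_neq0] := eqVneq (G (1 / 2 * x)) 0; first by rewrite g0 in Gx_le; lra.
have : `|0 - G x / G (1 / 2 * x)| < 1 / 2 by near: x; apply: ratio0; lra.
rewrite sub0r normrN ger0_norm ?divr_ge0 // => r_lt.
have /andP[_ g_le1] := G01 (1 / 2 * x).
rewrite -[G x](divfK g_neq0); apply: le_trans (ler_wpM2r (G_ge0 _) (ltW r_lt)) _.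
by rewrite ler_piMr //; lra.
Unshelve. all: by end_near.
Qed.

Section window_limits.
Variables (a b : R).
Hypothesis ab : a < b.
Let ba_gt0 : 0 < b - a. Proof. by rewrite subr_gt0. Qed.

Lemma one_sub_tail_window_cvg0 (M : R -> R) t : t < 1 ->
  (\forall l \near 0^'+, 0 <= M l) ->
  (forall z, 0 <= z < 1 -> (fun l => M l * G (aL l * z)) @ 0^'+ --> +oo) ->
  (fun l => (1 - G (aL l * t)) ^+ window_size a b (M l)) @ 0^'+ --> (0 : R).
Proof.
move=> t_lt1 M_ge0 MG_y; apply: one_sub_exp_cvg0 => //.
pose z := Num.max t 0.
have z01 : 0 <= z < 1 by rewrite /z le_max lexx orbT /= gt_max t_lt1 ltr01.
apply: (ger_cvgy _ (gt0_cvgMry ba_gt0 (MG_y z z01))).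
near=> l.
have aL_gt0 : 0 < aL l by near: l; move/cvgryPgt: aLy; apply.
have M0 : 0 <= M l by near: l.
have /andP[cM _] := window_size_bounds (ltW ab) M0.
rewrite mulrA; apply: ler_pM => //; first by rewrite mulr_ge0 // ltW.
by apply: G_noninc; rewrite ler_pM2l // le_max lexx.
Unshelve. all: by end_near.
Qed.

Lemma one_sub_tail_window_cvg1 (M : R -> R) t : 1 <= t ->
  M @ 0^'+ --> +oo -> (fun l => M l / nL l) @ 0^'+ --> (0 : R) ->
  (fun l => (1 - G (aL l * t)) ^+ window_size a b (M l)) @ 0^'+ --> (1 : R).
Proof.
move=> t_ge1 My MnL0; apply: one_sub_exp_cvg1 => //.
apply: (@squeeze_cvgr _ _ _ _ (fun=> 0) (fun l => (b - a + 2) * (M l / nL l)));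
  last 2 first.
- exact: cvg_cst.
- by rewrite -[X in _ --> X](mulr0 (b - a + 2)); exact: cvgMl_tmp.
near=> l.
have [_ aL_gt0 _] : [/\ 0 < l <= 1, 0 < aL l & 0 < G (aL l) <= 1].
  by near: l; exact: near_aL.
have [N_ge1 Nu_le1 _] : [/\ 1 <= nL l, nL l * G (aL l) <= 1 & 1 <= 2 * (nL l * G (aL l))].
  by near: l; exact: near_nL_bounds.
have M_ge1 : 1 <= M l by near: l; move/cvgryPge: My; apply.
have N_gt0 : 0 < nL l by exact: lt_le_trans ltr01 N_ge1.
have q_le : G (aL l * t) <= (nL l)^-1.
  have : aL l <= aL l * t by rewrite ler_peMr // ltW.
  move/G_noninc/le_trans; apply.
  by rewrite -(ler_pM2l N_gt0) mulfV ?gt_eqF.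
rewrite mulr_ge0 //= mulrA; apply: ler_pM => //.
exact: window_size_le (ltW ab) M_ge1.
Unshelve. all: by end_near.
Qed.

Lemma one_sub_tail_window_nL_cvg0 t : t < 1 ->
  (fun l => (1 - G (aL l * t)) ^+ window_size a b (nL l)) @ 0^'+ --> (0 : R).
Proof.
move=> t_lt1; apply: one_sub_exp_cvg0 => //.
pose z := Num.max t (1 / 2).
have [z_gt0 z_lt1] : 0 < z /\ z < 1.
  by rewrite /z lt_max gt_max t_lt1; split; [apply/orP; right|]; lra.
have r_y : (fun l => (G (aL l) / G (z * aL l))^-1) @ 0^'+ --> +oo.
  apply/cvgrVy; last by apply: cvg_comp aLy (ratio_lt1 _); rewrite z_gt0 z_lt1.
  apply: filterS near_aL => l [_ aL_gt0 /andP[u_gt0 _]]; rewrite divr_gt0 //.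
  by apply: lt_le_trans u_gt0 (G_noninc _); rewrite ger_pMl // ltW.
have ba2_gt0 : 0 < (b - a) / 2 by rewrite divr_gt0.
apply: (ger_cvgy _ (gt0_cvgMry ba2_gt0 r_y)).
near=> l.
have [_ aL_gt0 /andP[u_gt0 _]] : [/\ 0 < l <= 1, 0 < aL l & 0 < G (aL l) <= 1].
  by near: l; exact: near_aL.
have [N_ge1 _ Nu_ge] : [/\ 1 <= nL l, nL l * G (aL l) <= 1 & 1 <= 2 * (nL l * G (aL l))].
  by near: l; exact: near_nL_bounds.
have /andP[cN _] := window_size_bounds (ltW ab) (le_trans ler01 N_ge1).
have gq : G (z * aL l) <= G (aL l * t).
  by apply: G_noninc; rewrite mulrC ler_pM2r // le_max lexx.
set u := G (aL l) in u_gt0 Nu_ge *; set g := G (z * aL l) in gq *.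
have g_ge0 : 0 <= g by exact: G_ge0.
have lower_le : (b - a) / 2 * (u / g)^-1 <= (b - a) * nL l * g.
  have -> : (b - a) * nL l * g = (b - a) / 2 * (u / g)^-1 * (2 * (nL l * u)).
    by rewrite invf_div; field; rewrite gt_eqF.
  by rewrite ler_peMr // mulr_ge0 ?invr_ge0 ?divr_ge0 // ltW.
apply: le_trans lower_le (ler_pM _ _ cN gq) => //.
by rewrite mulr_ge0 ?(le_trans ler01 N_ge1) // ltW.
Unshelve. all: by end_near.
Qed.

Lemma one_sub_tail_window_nL_cvg1 t : 1 < t ->
  (fun l => (1 - G (aL l * t)) ^+ window_size a b (nL l)) @ 0^'+ --> (1 : R).
Proof.
move=> t_gt1; apply: one_sub_exp_cvg1 => //.
have r_y := cvg_comp _ _ aLy (ratio_gt1 t_gt1).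
have r0 : (fun l => (G (aL l) / G (t * aL l))^-1) @ 0^'+ --> (0 : R).
  by apply/gtr0_cvgV0 => //; move/cvgryPgt: r_y; apply.
apply: (@squeeze_cvgr _ _ _ _ (fun=> 0)
    (fun l => (b - a + 2) * (G (aL l) / G (t * aL l))^-1)); last 2 first.
- exact: cvg_cst.
- by rewrite -[X in _ --> X](mulr0 (b - a + 2)); exact: cvgMl_tmp.
near=> l.
have [_ aL_gt0 /andP[u_gt0 _]] : [/\ 0 < l <= 1, 0 < aL l & 0 < G (aL l) <= 1].
  by near: l; exact: near_aL.
have [N_ge1 Nu_le1 _] : [/\ 1 <= nL l, nL l * G (aL l) <= 1 & 1 <= 2 * (nL l * G (aL l))].
  by near: l; exact: near_nL_bounds.
rewrite mulr_ge0 //= invf_div (mulrC t).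
set u := G (aL l) in u_gt0 Nu_le1 *; set q := G (aL l * t).
apply: le_trans (ler_wpM2r (G_ge0 _) (window_size_le (ltW ab) N_ge1)) _.
rewrite -mulrA; apply: ler_wpM2l; first by rewrite addr_ge0 // ltW.
have -> : nL l * q = nL l * u * (q / u) by field; rewrite gt_eqF.
by apply: ler_piMl => //; apply: divr_ge0; [exact: G_ge0 | exact: ltW].
Unshelve. all: by end_near.
Qed.

Lemma one_sub_tail_exp_window_cvg1 (M : R -> R) t : 0 < t -> M @ 0^'+ --> +oo ->
  (fun l => 1 - G (aL l * t) ^+ window_size a b (M l)) @ 0^'+ --> (1 : R).
Proof.
move=> t_gt0 My; rewrite -[X in _ --> X]subr0; apply: cvgB; first exact: cvg_cst.
apply: exp_cvg0_le_half.
  have aLt_y : (fun l => aL l * t) @ 0^'+ --> +oo by exact: gt0_cvgMly.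
  by near=> l; rewrite G_ge0 /=; near: l; exact: aLt_y _ tail_le_half.
apply: (ger_cvgy _ (gt0_cvgMry ba_gt0 My)).
near=> l; have M_ge0 : 0 <= M l by near: l; move/cvgryPge: My; apply.
by case/andP: (window_size_bounds (ltW ab) M_ge0).
Unshelve. all: by end_near.
Qed.

End window_limits.

End tail_asymptotics.

Theorem mainTheorem10
  (R : realType) (d : measure_display) (Omega : measurableType d)
  (P : probability Omega R)
  (* the law mu_S, hypothesis (H_S(oo)) *)
  (muS : probability R R)
  (muS_pos : muS `]0%R, +oo[%classic = 1%E)
  (muS_unbounded : forall x : R, (0 < muS `]x, +oo[%classic)%E)
  (muS_mean : muS.-integrable setT (fun x : R => x%:E))
  (HS_lt1 : forall t : R, 0 < t < 1 ->
     (fun x : R => fine (nu muS `]x, +oo[%classic) / fine (nu muS `](t * x), +oo[%classic))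
       @ +oo --> (0 : R))
  (HS_eq1 : (fun x : R => fine (nu muS `]x, +oo[%classic) / fine (nu muS `](1 * x), +oo[%classic))
       @ +oo --> (1 : R))
  (HS_gt1 : forall t : R, 1 < t ->
     (fun x : R => fine (nu muS `]x, +oo[%classic) / fine (nu muS `](t * x), +oo[%classic))
       @ +oo --> +oo)
  (* a_lambda, n_lambda, m_lambda *)
  (aL : R -> R)
  (aL_def : forall l : R, 0 < l <= 1 -> l * aL l = fine (nu muS `](aL l), +oo[%classic))
  (mL : R -> nat)
  (mL_noninc : forall l l' : R, 0 < l -> l <= l' -> l' <= 1 -> (mL l' <= mL l)%N)
  (mL_infty : (fun l : R => (mL l)%:R : R) @ 0^'+ --> +oo)
  (mL_small : (fun l : R => (mL l)%:R / (Num.floor (1 / (l * aL l)))%:~R : R)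
                @ 0^'+ --> (0 : R))
  (mL_nu : forall z : R, 0 <= z < 1 ->
     (fun l : R => (mL l)%:R * fine (nu muS `](aL l * z), +oo[%classic) : R) @ 0^'+ --> +oo)
  (* i.i.d. SR(mu_S) processes N^S(i), i in Z *)
  (T1 : int -> Omega -> R) (X : int -> nat -> Omega -> R)
  (indep : mutually_independent P (SRfamily T1 X))
  (T1_law : forall (i : int) (A : set R), measurable A -> P (T1 i @^-1` A) = nu muS A)
  (X_law : forall (i : int) (k : nat) (A : set R), measurable A ->
             P (X i k @^-1` A) = muS A)
  (a b : R) (hab : a < b) :
  let nL := fun l : R => Num.floor (1 / (l * aL l)) in
  let N := Ncount T1 X in
  (* (i) *)
  (forall t : R, t < 1 ->
     (fun l : R => P [set w : Omega | forall i : int,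
         Num.floor (a * (mL l)%:R) <= i <= Num.floor (b * (mL l)%:R) ->
         (0 < N i (aL l * t)%R w)%E]) @ 0^'+ --> 0%E) /\
  (* (ii) *)
  (forall t : R, 1 <= t ->
     (fun l : R => P [set w : Omega | forall i : int,
         Num.floor (a * (mL l)%:R) <= i <= Num.floor (b * (mL l)%:R) ->
         (0 < N i (aL l * t)%R w)%E]) @ 0^'+ --> 1%E) /\
  (* (iii) *)
  (forall t : R, t < 1 ->
     (fun l : R => P [set w : Omega | forall i : int,
         Num.floor (a * (nL l)%:~R) <= i <= Num.floor (b * (nL l)%:~R) ->
         (0 < N i (aL l * t)%R w)%E]) @ 0^'+ --> 0%E) /\
  (* (iv) *)
  (forall t : R, 1 < t ->
     (fun l : R => P [set w : Omega | forall i : int,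
         Num.floor (a * (nL l)%:~R) <= i <= Num.floor (b * (nL l)%:~R) ->
         (0 < N i (aL l * t)%R w)%E]) @ 0^'+ --> 1%E) /\
  (* (v) *)
  (forall t : R, 0 < t ->
     (fun l : R => P [set w : Omega | exists i : int,
         Num.floor (a * (mL l)%:R) <= i <= Num.floor (b * (mL l)%:R) /\
         (0 < N i (aL l * t)%R w)%E]) @ 0^'+ --> 1%E).
Proof.
move=> nL N; rewrite {}/nL {}/N.
pose G := tail_nu muS.
have G01 : forall x, 0 <= G x <= 1 := tail_nu_ge0_le1 indep T1_law.
have G_noninc : {homo G : x y / x <= y >-> y <= x} := tail_nu_noninc indep T1_law.
have aLy := aL_cvgy G01 G_noninc aL_def HS_eq1.
have mL_ge0 : \forall l \near 0^'+, 0 <= (mL l)%:R :> R by exact: nearW.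
have nL_ge0 : \forall l \near 0^'+, 0 <= (Num.floor (1 / (l * aL l)))%:~R :> R.
  by apply: filterS (near_nL_bounds G01 aL_def aLy) => l [/(le_trans ler01)].
split; [|split; [|split; [|split]]] => t ht.
- apply: (prob_window_all_cvg indep T1_law muS_pos X_law hab) => //.
  by apply: (one_sub_tail_window_cvg0 G01 G_noninc aLy hab ht mL_ge0).
- apply: (prob_window_all_cvg indep T1_law muS_pos X_law hab) => //.
  by apply: (one_sub_tail_window_cvg1 G01 G_noninc aL_def aLy hab ht).
- apply: (prob_window_all_cvg indep T1_law muS_pos X_law hab) => //.
  exact: (one_sub_tail_window_nL_cvg0 G01 G_noninc aL_def aLy HS_lt1 hab ht).
- apply: (prob_window_all_cvg indep T1_law muS_pos X_law hab) => //.
  exact: (one_sub_tail_window_nL_cvg1 G01 aL_def aLy HS_gt1 hab ht).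
- apply: (prob_window_exists_cvg indep T1_law muS_pos X_law hab) => //.
  by apply: (one_sub_tail_exp_window_cvg1 G01 G_noninc aLy HS_lt1 hab ht).
Qed.
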